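(* Let $s\ge 2$, let $J$ be a finite index set, and let $\gamma_j\ge 0$ ($j\in J$) with $\sum_{j\in J}\gamma_j\le 1$. For each $j\in J$ and $i'\in[s]$ let $S^j_{i'}$ be a finite set and $f^j_{i'}$ a nonnegative integer with $f^j_{i'}\le |S^j_{i'}|$, such that for each fixed $j$ the sets $S^j_1,\dots,S^j_s$ are pairwise disjoint. Let $S_{i'}=\bigcup_{j\in J}S^j_{i'}$. Then there exist pairwise disjoint sets $T_{i'}\subseteq S_{i'}$, $i'=1,\dots,s$, such that $|T_{i'}|=\left\lfloor \sum_{j\in J}\gamma_j f^j_{i'}\right\rfloor$ for all $i'\in[s]$. *)

From HB Require Import structures.
From mathcomp Require Import all_boot all_order all_algebra.
Set Implicit Arguments. Unset Strict Implicit. Unset Printing Implicit Defensive.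

From HB Require Import structures.
From mathcomp Require Import all_boot all_order all_algebra.
Import Order.TTheory GRing.Theory Num.Theory.

Set Implicit Arguments.
Unset Strict Implicit.
Unset Printing Implicit Defensive.

(* The theorem is an instance of Hall's theorem with multiplicities: for a
   finite family of sets A_i with demands n_i, if every subfamily P satisfies
   Hall's condition  sum_(i in P) n_i <= |U_(i in P) A_i|,  then there are
   pairwise disjoint T_i \subset A_i with |T_i| = n_i.

   Hall's theorem is proved by the Halmos-Vaughan/Rado reduction: if two sets
   A_i, A_k share an element x, then removing x from A_i or from A_k preserves
   Hall's condition (by submodularity of  P |-> |U_(i in P) A_i|), so by
   induction on sum_i |A_i| we reach a pairwise disjoint family, for which any
   n_i-subsets T_i of the A_i do.

   The theorem follows with A_i = U_j S^j_i and n_i = floor (sum_j gamma_j f^j_i):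
   for each j the disjointness of the S^j_i gives sum_(i in P) f^j_i <=
   |U_(i in P) A_i|, and averaging these inequalities with the weights gamma_j,
   whose sum is at most 1, yields Hall's condition. *)

Lemma card_bigcup_disjoint (I U : finType) (F : I -> {set U}) (P : {set I}) :
  (forall i k, i != k -> [disjoint F i & F k]) ->
  \sum_(i in P) #|F i| = #|\bigcup_(i in P) F i|.
Proof.
move=> disjF; elim: {P}_.+1 {-2}P (ltnSn #|P|) => // m IH P sizeP.
have [/cards0_eq -> | /card_gt0P [a aP]] := posnP #|P|.
  by rewrite !big_set0 cards0.
rewrite (big_setD1 a aP) [\bigcup_(i in P) _](big_setD1 a aP) /=.
have disj_a : [disjoint F a & \bigcup_(i in P :\ a) F i].
  apply: bigcup_disjoint => i; rewrite !inE eq_sym => /andP [ai _]; exact: disjF.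
rewrite cardsU (disjoint_setI0 disj_a) cards0 subn0 IH //.
by move: sizeP; rewrite (cardsD1 a P) aP add1n ltnS.
Qed.

Lemma sum_setU_setI (I : finType) (n : I -> nat) (P Q : {set I}) :
  \sum_(i in P :|: Q) n i + \sum_(i in P :&: Q) n i =
  \sum_(i in P) n i + \sum_(i in Q) n i.
Proof.
rewrite !(big_mkcond (fun i => i \in _)) -!big_split /=.
by apply: eq_bigr => i _; rewrite !inE; case: (i \in P); case: (i \in Q); rewrite /= ?addn0.
Qed.

Lemma exists_subset_card (U : finType) (B : {set U}) c :
  c <= #|B| -> exists2 C : {set U}, C \subset B & #|C| = c.
Proof.
elim: c => [|c IH] leB; first by exists set0; rewrite ?sub0set ?cards0.
have [C subCB cardC] := IH (ltnW leB).
have [y] : exists y, y \in B :\: C.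
  by apply/set0Pn; rewrite -card_gt0 cardsD (setIidPr subCB) subn_gt0 cardC.
rewrite inE => /andP [yC yB].
by exists (y |: C); rewrite ?cardsU1 ?yC ?cardC // subUset sub1set yB.
Qed.

Lemma card_sub_setU1 (U : finType) (x : U) (C D : {set U}) :
  C \subset x |: D -> #|C| <= (x \in C) + #|D|.
Proof.
move=> subC; rewrite (cardsD1 x C) leq_add2l; apply: subset_leq_card.
by apply/subsetP => y; rewrite !inE => /andP [yx /(subsetP subC)]; rewrite !inE (negbTE yx).
Qed.

Section HallMultiplicity.
Variables (I U : finType) (n : I -> nat).
Implicit Types (A T : I -> {set U}) (P : {set I}).

Definition hall_condition A : bool :=
  [forall P : {set I}, \sum_(i in P) n i <= #|\bigcup_(i in P) A i|].

Definition disjoint_selection A T : Prop :=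
  [/\ forall i, T i \subset A i,
      forall i k, i != k -> [disjoint T i & T k]
    & forall i, #|T i| = n i].

Definition remove_at A i (x : U) : I -> {set U} :=
  fun l => if l == i then A i :\ x else A l.

Lemma remove_at_sub A i x l : remove_at A i x l \subset A l.
Proof. by rewrite /remove_at; case: eqP => [->|_]; rewrite ?subsetDl. Qed.

Lemma remove_at_other A i x l : l != i -> remove_at A i x l = A l.
Proof. by rewrite /remove_at => /negbTE ->. Qed.

Lemma remove_at_mem A i x l y : y \in A l -> y != x -> y \in remove_at A i x l.
Proof. by rewrite /remove_at; case: (eqVneq l i) => [->|_] yA yx; rewrite ?inE ?yx. Qed.

Lemma remove_at_card A i x :
  x \in A i -> \sum_l #|remove_at A i x l| < \sum_l #|A l|.
Proof.
move=> xA; rewrite (bigD1 i) // [X in _ < X](bigD1 i) //=.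
rewrite (eq_bigr (fun l => #|A l|)) => [|l li]; last by rewrite remove_at_other.
by rewrite ltn_add2r /remove_at eqxx (cardsD1 x (A i)) xA.
Qed.

Lemma bigcup_remove_at A i x P :
  \bigcup_(l in P) A l \subset x |: \bigcup_(l in P) remove_at A i x l.
Proof.
apply/bigcupsP => l lP; apply/subsetP => y yA; rewrite inE in_set1.
case: (eqVneq y x) => //= yx; apply/bigcupP; exists l => //; exact: remove_at_mem.
Qed.

(* If both removals had
   violating subfamilies P and Q, with unions X and Y, then the unions of A
   over P :|: Q and P :&: Q have together at most |X| + |Y| + 1 elements,
   contradicting Hall's condition for A on P :|: Q and P :&: Q. *)
Lemma hall_remove_at A i k x :
  hall_condition A -> i != k -> x \in A i -> x \in A k ->
  hall_condition (remove_at A i x) || hall_condition (remove_at A k x).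
Proof.
move=> hallA ik xi xk; apply/negPn/negP => /norP [/forallPn [P] + /forallPn [Q]].
rewrite -!ltnNge => ltP ltQ.
set X := \bigcup_(l in P) _ in ltP; set Y := \bigcup_(l in Q) _ in ltQ.
have cover_PQ : \bigcup_(l in P :|: Q) A l \subset x |: (X :|: Y).
  rewrite bigcup_setU -[[set x]]setUid setUACA.
  by apply: setUSS; apply: bigcup_remove_at.
have cover_PIQ : \bigcup_(l in P :&: Q) A l \subset x |: (X :&: Y).
  apply/bigcupsP => l; rewrite inE => /andP [lP lQ]; apply/subsetP => y yA.
  rewrite !inE; case: (eqVneq y x) => //= yx.
  by apply/andP; split; apply/bigcupP; exists l => //; apply: remove_at_mem.
have x_XY : x \in \bigcup_(l in P :&: Q) A l -> x \in X :|: Y.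
  case/bigcupP => l; rewrite inE => /andP [lP lQ] xA; rewrite inE.
  have [li | li] := eqVneq l i.
    by apply/orP; right; apply/bigcupP; exists l; rewrite // remove_at_other // li.
  by apply/orP; left; apply/bigcupP; exists l; rewrite // remove_at_other.
have card_PIQ : #|\bigcup_(l in P :&: Q) A l| <= (x \in X :|: Y) + #|X :&: Y|.
  apply: leq_trans (card_sub_setU1 cover_PIQ) _; rewrite leq_add2r.
  by case: (x \in \bigcup_(l in P :&: Q) _) x_XY => // ->.
have := leq_add (forallP hallA (P :|: Q)) (forallP hallA (P :&: Q)).
rewrite sum_setU_setI leqNgt => /negP; apply.
apply: leq_ltn_trans (leq_add (subset_leq_card cover_PQ) card_PIQ) _.
rewrite cardsU1 addnACA addn_negb cardsUI add1n.
by rewrite -addnS -addSn; apply: leq_add.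
Qed.

Lemma hall_disjoint_family A :
  hall_condition A -> (forall i k, i != k -> [disjoint A i & A k]) ->
  exists T, disjoint_selection A T.
Proof.
move=> hallA disjA.
have demand_le i : n i <= #|A i|.
  by have := forallP hallA [set i]; rewrite !big_set1.
have [T subT cardT] := fin_all_exists2 (fun i => exists_subset_card (demand_le i)).
exists T; split=> // i k ik.
exact: disjointWl (subT i) (disjointWr (subT k) (disjA i k ik)).
Qed.

Theorem hall_multiplicity A :
  hall_condition A -> exists T, disjoint_selection A T.
Proof.
elim: {A}_.+1 {-2}A (ltnSn (\sum_l #|A l|)) => // m IH A sizeA hallA.
have [/forallP disjA | overlap] :=
  boolP [forall i, forall k, (i != k) ==> [disjoint A i & A k]].
  apply: hall_disjoint_family => // i k.
  by move/forallP: (disjA i) => /(_ k) /implyP; apply.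
have [i /forallPn [k]] := forallPn overlap; rewrite negb_imply => /andP [ik].
rewrite -setI_eq0 => /set0Pn [x]; rewrite inE => /andP [xi xk].
have shrink l : x \in A l -> hall_condition (remove_at A l x) ->
    exists T, disjoint_selection A T.
  move=> xl /(IH _ (leq_trans (remove_at_card xl) sizeA)) [T [subT disjT cardT]].
  by exists T; split=> // j; apply: subset_trans (subT j) (remove_at_sub _ _ _ _).
by case/orP: (hall_remove_at hallA ik xi xk); [apply: shrink xi | apply: shrink xk].
Qed.

End HallMultiplicity.

Lemma weighted_demand_hall (I J U : finType) (R : numDomainType)
  (gamma : J -> R) (S : J -> I -> {set U}) (f : J -> I -> nat) (P : {set I}) :
  (forall j, 0 <= gamma j)%R -> (\sum_(j : J) gamma j <= 1)%R ->
  (forall j i, f j i <= #|S j i|) ->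
  (forall j i k, i != k -> [disjoint S j i & S j k]) ->
  (\sum_(i in P) \sum_(j : J) gamma j * (f j i)%:R
     <= #|\bigcup_(i in P) \bigcup_(j : J) S j i|%:R)%R.
Proof.
move=> gamma_ge0 gamma_le1 f_le disjS.
set N := #|_|; rewrite exchange_big /=.
have part_le j : \sum_(i in P) f j i <= N.
  apply: (@leq_trans (\sum_(i in P) #|S j i|)); first by apply: leq_sum => i _.
  rewrite (card_bigcup_disjoint P (disjS j)); apply/subset_leq_card/bigcupsP => i iP.
  by apply: subset_trans (bigcup_sup i iP); apply: (bigcup_sup j).
apply: le_trans (_ : \sum_j gamma j * N%:R <= N%:R)%R.
  apply: ler_sum => j _; rewrite -mulr_sumr -natr_sum.
  by rewrite ler_wpM2l // ler_nat part_le.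
by rewrite -mulr_suml ler_piMl.
Qed.

Theorem mainTheorem2 (s : nat) (hs : (2 <= s)%N) (J : finType)
  (R : archiRealFieldType) (gamma : J -> R) (U : finType)
  (S : J -> 'I_s -> {set U}) (f : J -> 'I_s -> nat)
  (hg0 : forall j, (0 <= gamma j)%R)
  (hg1 : (\sum_(j : J) gamma j <= 1)%R)
  (hf : forall j i, (f j i <= #|S j i|)%N)
  (hdisj : forall j (i k : 'I_s), i != k -> [disjoint S j i & S j k]) :
  exists T : 'I_s -> {set U},
    (forall i, T i \subset \bigcup_(j : J) S j i) /\
    (forall i k : 'I_s, i != k -> [disjoint T i & T k]) /\
    (forall i, (#|T i|%:Z = Num.floor (\sum_(j : J) gamma j * (f j i)%:R))%R).
Proof.
pose x i := (\sum_(j : J) gamma j * (f j i)%:R)%R.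
pose n i := `|Num.floor (x i)|%N.
have n_floor i : ((n i)%:Z = Num.floor (x i))%R.
  by rewrite gez0_abs // floor_ge0 sumr_ge0 // => j _; rewrite mulr_ge0.
have n_le i : ((n i)%:R <= x i)%R.
  by rewrite -[((n i)%:R)%R]/(((n i)%:Z)%:~R : R)%R n_floor floor_le.
have hallA : hall_condition n (fun i => \bigcup_(j : J) S j i).
  apply/forallP => P; rewrite -(ler_nat R) natr_sum.
  apply: le_trans (weighted_demand_hall P hg0 hg1 hf hdisj).
  by apply: ler_sum => i _; apply: n_le.
have [T [subT disjT cardT]] := hall_multiplicity hallA.
by exists T; split; [|split] => // i; rewrite cardT n_floor.
Qed.
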